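(* Let $n\ge1$. Then $v_1+v_2+\cdots+v_{2n}=n(n+1)$.
   Context: $k$ is a field of characteristic zero, $\mathcal O_n=k[x]/(x^{n+1})$, elements of $\mathcal O_n$ identified with multiplication operators, $\operatorname{ad}_x(\delta)=x\delta-\delta x$. The order filtration is $\mathcal D^p(\mathcal O_n)=\{\delta\in\operatorname{End}_k(\mathcal O_n):[f_0,[f_1,\dots,[f_p,\delta]\dots]]=0\ \forall f_i\in\mathcal O_n\}$. For $\delta\in\mathcal D^p(\mathcal O_n)$, $\operatorname{ad}_x^p(\delta)$ is multiplication by an element of $\mathcal O_n$ and $\operatorname{ad}_x^p:\mathcal D^p(\mathcal O_n)\to\mathcal O_n$ is $\mathcal O_n$-linear, so its image is an ideal $(x^{v_p})$ of $\mathcal O_n$; $v_p\in\{0,\dots,n\}$ denotes the corresponding exponent. *)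

From HB Require Import structures.
From mathcomp Require Import all_boot all_order all_algebra.
Set Implicit Arguments. Unset Strict Implicit. Unset Printing Implicit Defensive.
Import GRing.Theory.
Local Open Scope ring_scope.

(* O_n = k[x]/(x^{n+1}) is modelled by the coordinate space k^{n+1} with basis
   1, x, ..., x^n (column vectors); End_k(O_n) = 'M[k]_(n.+1). *)

(* multiplication by x : column j (= x^j) is sent to x^(j+1) (or 0 if j = n) *)
Definition Xmx (k : fieldType) (n : nat) : 'M[k]_(n.+1) :=
  \matrix_(i, j) ((i == j.+1 :> nat)%:R).

Definition mulop (k : fieldType) (n : nat) (f : {poly k}) : 'M[k]_(n.+1) :=
  horner_mx (Xmx k n) f.

Definition commx (k : fieldType) (n : nat) (a d : 'M[k]_(n.+1)) : 'M[k]_(n.+1) :=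
  a *m d - d *m a.

Definition adx (k : fieldType) (n : nat) (d : 'M[k]_(n.+1)) : 'M[k]_(n.+1) :=
  commx (Xmx k n) d.

Definition inDp (k : fieldType) (n p : nat) (d : 'M[k]_(n.+1)) : Prop :=
  forall fs : seq {poly k}, size fs = p.+1 ->
    foldr (fun f e => commx (mulop n f) e) d fs = 0.

Definition vp_spec (k : fieldType) (n p v : nat) : Prop :=
  (v <= n)%N /\
  forall A : 'M[k]_(n.+1),
    (exists d : 'M[k]_(n.+1), @inDp k n p d /\ iter p (@adx k n) d = A) <->
    (exists g : {poly k}, A = @mulop k n ('X^v * g)).

(* Identify End_k(O_n) with (n+1) x (n+1) matrices, multiplication by x with
   the shift X.  An operator lies in D^p iff ad_x^(p+1) kills it, and X^v is
   killed by ad_x, so v_p is the least v with X^v in the image of ad_x^p.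
   On a matrix carrying the values Q(j) of a polynomial along one diagonal,
   ad_x moves to the next diagonal and replaces Q by its finite difference,
   provided Q vanishes at the boundary.  Taking Q of degree 2c with roots
   0..c-1 and n+1..n+c shows that X^c = ad_x^(2c)(A); conversely, pairing a
   diagonal with a polynomial W of degree 2v is adjoint to ad_x up to a
   difference of W, and shows that X^v is not in the image of ad_x^p for
   p > 2v.  Hence v_p = ceil(p/2), and summing gives n(n+1). *)

From HB Require Import structures.
From mathcomp Require Import all_boot all_order all_algebra ring zify.
Set Implicit Arguments. Unset Strict Implicit. Unset Printing Implicit Defensive.
Import GRing.Theory.
Local Open Scope ring_scope.

Section MatrixEntries.
Variables (k : fieldType) (n : nat).
Implicit Types (M N : 'M[k]_n.+1) (i j v : nat).

Local Notation X := (Xmx k n).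

Definition ent M i j : k :=
  if (i < n.+1)%N && (j < n.+1)%N then M (inord i) (inord j) else 0.

Lemma entE M (i j : 'I_n.+1) : M i j = ent M i j.
Proof. by rewrite /ent !ltn_ord !inord_val. Qed.

Lemma ent_out M i j : ~~ ((i < n.+1)%N && (j < n.+1)%N) -> ent M i j = 0.
Proof. by rewrite /ent => /negbTE ->. Qed.

Lemma eq_mx_ent M N :
  (forall i j, (i < n.+1)%N -> (j < n.+1)%N -> ent M i j = ent N i j) -> M = N.
Proof. by move=> eqMN; apply/matrixP=> i j; rewrite !entE eqMN. Qed.

Lemma ent_Xmxl M i j :
  ent (X *m M) i j =
  if (i < n.+1)%N && (j < n.+1)%N then (if i is i'.+1 then ent M i' j else 0)
  else 0.
Proof.
rewrite /ent; case: ifP => // /andP[hi hj]; rewrite mxE.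
case: i hi => [|i] hi /=.
  by rewrite big1 // => l _; rewrite /Xmx mxE inordK // mul0r.
rewrite (ltnW hi) hj (bigD1 (inord i)) //= big1 ?addr0.
  by rewrite /Xmx mxE !inordK ?eqxx ?mul1r // ltnW.
move=> l hl; rewrite /Xmx mxE inordK //.
case: eqP => [e|]; last by rewrite mul0r.
by case/eqP: hl; apply: val_inj; rewrite /= inordK ?(ltnW hi) //; case: e.
Qed.

Lemma ent_Xmxr M i j :
  ent (M *m X) i j = if (i < n.+1)%N && (j < n.+1)%N then ent M i j.+1 else 0.
Proof.
rewrite /ent; case: ifP => // /andP[hi hj]; rewrite mxE hi /=.
case: (ltnP j.+1 n.+1) => hj1 /=.
  rewrite (bigD1 (inord j.+1)) //= big1 ?addr0.
    by rewrite /Xmx mxE !inordK // eqxx mulr1.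
  move=> l hl; rewrite /Xmx mxE inordK //.
  case: eqP => [e|]; last by rewrite mulr0.
  by case/eqP: hl; apply: val_inj; rewrite /= inordK // -e.
rewrite big1 // => l _; rewrite /Xmx mxE inordK //.
case: eqP => [e|]; last by rewrite mulr0.
by move: (ltn_ord l); rewrite e ltnNge hj1.
Qed.

Lemma ent_adx M i j :
  ent (adx M) i j =
  if (i < n.+1)%N && (j < n.+1)%N then
    (if i is i'.+1 then ent M i' j else 0) - ent M i j.+1
  else 0.
Proof.
have entB N N' i' j' : ent (N - N') i' j' = ent N i' j' - ent N' i' j'.
  by rewrite /ent; case: ifP; rewrite ?subr0 ?mxE.
by rewrite /adx /commx entB ent_Xmxl ent_Xmxr; case: ifP; rewrite ?subr0.
Qed.

Lemma ent_Xmxn_mull v M i j :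
  ent (X ^+ v *m M) i j =
  if (i < n.+1)%N && (j < n.+1)%N then
    (if (v <= i)%N then ent M (i - v) j else 0)
  else 0.
Proof.
elim: v i j => [|v IH] i j.
  by rewrite expr0 mul1mx /ent subn0; case: ifP.
rewrite exprS -mulmxE -mulmxA ent_Xmxl; case: ifP => // /andP[hi hj].
by case: i hi => [|i] hi //=; rewrite IH (ltnW hi) hj /= ltnS subSS.
Qed.

Lemma ent_Xmxn v i j :
  ent (X ^+ v) i j =
  if (i < n.+1)%N && (j < n.+1)%N then (i == j + v)%N%:R else 0.
Proof.
rewrite -[X ^+ v]mulmx1 ent_Xmxn_mull; case: ifP => // /andP[hi hj].
rewrite /ent (leq_ltn_trans (leq_subr _ _) hi) hj /= mxE.
rewrite -(inj_eq val_inj) /= !inordK ?(leq_ltn_trans (leq_subr _ _) hi) //.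
case: leqP => hv; first by congr (_%:R); apply/eqP/eqP; lia.
by case: eqP => // e; lia.
Qed.

End MatrixEntries.

Section FiniteDifference.
Variable k : fieldType.
Implicit Types (a c x : k) (P Q : {poly k}).

Definition fdiff a Q : {poly k} := Q - (Q \Po ('X + a%:P)).

Lemma horner_fdiff a Q x : (fdiff a Q).[x] = Q.[x] - Q.[x + a].
Proof.
by rewrite /fdiff hornerD hornerN horner_comp hornerD hornerX hornerC.
Qed.

Lemma iter_fdiffD a m P Q :
  iter m (fdiff a) (P + Q) = iter m (fdiff a) P + iter m (fdiff a) Q.
Proof. by elim: m => //= m ->; rewrite /fdiff comp_polyD opprD addrACA. Qed.

Lemma iter_fdiffZ a c m Q : iter m (fdiff a) (c *: Q) = c *: iter m (fdiff a) Q.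
Proof. by elim: m => //= m ->; rewrite /fdiff comp_polyZ scalerBr. Qed.

Lemma size_fdiff a Q : (size (fdiff a Q) <= (size Q).-1)%N.
Proof.
have [hQ|hQ] := leqP (size Q) 1.
  by rewrite (size1_polyC hQ) /fdiff comp_polyC subrr size_poly0.
have hs : size (Q \Po ('X + a%:P)) = size Q.
  by rewrite size_comp_poly2 ?size_XaddC.
have hl : lead_coef (Q \Po ('X + a%:P)) = lead_coef Q.
  by rewrite lead_coef_comp ?size_XaddC // lead_coefXaddC expr1n mulr1.
apply/leq_sizeP => j hj; rewrite /fdiff coefB.
case: (ltngtP j (size Q).-1) => hj'.
- by move: hj; rewrite leqNgt hj'.
- by rewrite !nth_default ?subrr ?hs //; move: hj'; case: (size Q).
- by rewrite hj'; move: hl; rewrite /lead_coef hs => ->; rewrite subrr.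
Qed.

Lemma iter_fdiff_eq0 a m Q : (size Q <= m)%N -> iter m (fdiff a) Q = 0.
Proof.
elim: m Q => [|m IH] Q hQ; first by apply/eqP; rewrite -size_poly_eq0 -leqn0.
rewrite iterSr IH // (leq_trans (size_fdiff _ _)) //.
by rewrite -ltnS; case: (size Q) hQ.
Qed.

Lemma iter_fdiff_root a x m s t Q :
  (forall i, (i < m)%N -> Q.[x + i%:R * a] = 0) -> (t + s < m)%N ->
  (iter s (fdiff a) Q).[x + t%:R * a] = 0.
Proof.
move=> hQ; elim: s t => [|s IH] t hts; first by apply: hQ; rewrite -(addn0 t).
have shift : x + t%:R * a + a = x + (t.+1)%:R * a.
  by rewrite -natr1 mulrDl mul1r addrA.
by rewrite iterS horner_fdiff shift (IH t) ?(IH t.+1) ?subrr //; lia.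
Qed.

Lemma coef_XaddC1_exp m j : (('X + 1%:P) ^+ m : {poly k})`_j = 'C(m, j)%:R.
Proof.
elim: m j => [|m IH] j; first by rewrite expr0 coefC; case: j.
rewrite exprSr mulrDr mulr1 coefD coefMX.
by case: j => [|j] /=; rewrite !IH ?bin0 ?add0r // binS natrD addrC.
Qed.

Lemma size_fdiff1_Xn m :
  (size (fdiff 1 'X^(m.+1) + (m.+1)%:R *: 'X^m)%R <= m)%N.
Proof.
apply/leq_sizeP => j hj.
rewrite /fdiff comp_Xn_poly coefD coefB coefZ !coefXn coef_XaddC1_exp.
case: (ltngtP j m.+1) => hj'.
- have -> : j = m by apply/eqP; rewrite eqn_leq hj -ltnS hj'.
  by rewrite eqxx binSn mulr1 /= sub0r addNr.
- by rewrite (gtn_eqF (ltnW hj')) bin_small //= mulr0 addr0 subrr.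
- by rewrite hj' binn (gtn_eqF (ltnSn m)) /= mulr0 addr0 subrr.
Qed.

Lemma iter_fdiff1_Xn m : iter m (fdiff 1) 'X^m = ((-1) ^+ m * m`!%:R)%:P.
Proof.
elim: m => [|m IH]; first by rewrite expr0 mul1r.
rewrite iterSr -[fdiff 1 _](addrK ((m.+1)%:R *: 'X^m)) iter_fdiffD.
rewrite iter_fdiff_eq0 ?size_fdiff1_Xn // add0r -scaleNr iter_fdiffZ IH.
by rewrite -mul_polyC -polyCM factS natrM exprS; congr _%:P; ring.
Qed.

Lemma iter_fdiff1_monic m P : P \is monic -> size P = m.+1 ->
  iter m (fdiff 1) P = ((-1) ^+ m * m`!%:R)%:P.
Proof.
move=> /monicP lcP sP; rewrite -(subrK 'X^m P) iter_fdiffD iter_fdiff1_Xn.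
rewrite iter_fdiff_eq0 ?add0r //.
apply/leq_sizeP => j hj; rewrite coefB coefXn.
case: (ltngtP j m) => hj'.
- by move: hj; rewrite leqNgt hj'.
- by rewrite nth_default ?sP //= subr0.
- by move: lcP; rewrite /lead_coef sP hj' => ->; rewrite subrr.
Qed.

End FiniteDifference.

Section ProgressionPoly.
Variable k : fieldType.
Implicit Types (a x : k).

Definition progression_poly x a m : {poly k} :=
  \prod_(r <- mkseq (fun i => x + i%:R * a) m) ('X - r%:P).

Lemma monic_progression_poly x a m : progression_poly x a m \is monic.
Proof. exact: monic_prod_XsubC. Qed.

Lemma size_progression_poly x a m : size (progression_poly x a m) = m.+1.
Proof. by rewrite size_prod_XsubC size_mkseq. Qed.

Lemma size_progression_polyM x a y b m :
  size (progression_poly x a m * progression_poly y b m) = (2 * m).+1.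
Proof.
rewrite size_monicM ?monic_progression_poly -?size_poly_eq0;
  by rewrite ?size_progression_poly //; lia.
Qed.

Lemma progression_poly_root x a m i :
  (i < m)%N -> (progression_poly x a m).[x + i%:R * a] = 0.
Proof.
move=> lt_im; apply/rootP; rewrite root_prod_XsubC.
by apply: map_f; rewrite mem_iota.
Qed.

Lemma horner_progression_poly x a m y :
  (progression_poly x a m).[y] = \prod_(i < m) (y - (x + i%:R * a)).
Proof.
rewrite horner_prod /mkseq big_map -(subn0 m) -/(index_iota 0 m).
rewrite big_mkord subn0.
by apply: eq_bigr => i _; rewrite hornerXsubC.
Qed.

End ProgressionPoly.

Section PolyDiagonal.
Variables (k : fieldType) (n : nat).
Implicit Types (Q : {poly k}) (d e : nat).

(* The two nat offsets encode the diagonal [i - j = e - d]. *)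
Definition polydiag_mx d e Q : 'M[k]_n.+1 :=
  \matrix_(i, j) if (i + d == j + e)%N then Q.[(j : nat)%:R] else 0.

Lemma ent_polydiag d e Q i j : (i < n.+1)%N -> (j < n.+1)%N ->
  ent (polydiag_mx d e Q) i j = if (i + d == j + e)%N then Q.[j%:R] else 0.
Proof. by move=> hi hj; rewrite /ent hi hj mxE !inordK. Qed.

(* While the diagonal meets the first row and the last column, [Q] must
   vanish at the two boundary positions. *)
Lemma adx_polydiag d e Q :
  ((e < d)%N -> Q.[(d - e.+1)%:R] = 0 /\ Q.[n.+1%:R] = 0) ->
  adx (polydiag_mx d e Q) = polydiag_mx d e.+1 (fdiff 1 Q).
Proof.
move=> hQ; apply: eq_mx_ent => i j hi hj.
rewrite ent_adx hi hj /= [RHS]ent_polydiag // horner_fdiff natr1.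
have [hj1|hj1] := ltnP j.+1 n.+1.
  rewrite ent_polydiag //; case: i hi => [|i] hi.
    rewrite sub0r; case: eqP => e1; case: eqP => e2; try lia;
      last by rewrite oppr0.
    have -> : j = (d - e.+1)%N by lia.
    by rewrite (hQ ltac:(lia)).1 sub0r.
  rewrite ent_polydiag ?(ltnW hi) //.
  by case: eqP => e1; case: eqP => e2; case: eqP => e3; try lia; rewrite ?subr0.
have -> : j = n by lia.
rewrite ent_out ?negb_and ?ltnn ?orbT // subr0.
case: i hi => [|i] hi.
  case: eqP => e1 //; have [Qn Qn1] := hQ ltac:(lia).
  by rewrite Qn1 subr0 -Qn; congr (_.[_]); congr (_%:R); lia.
rewrite ent_polydiag ?(ltnW hi) //.
by case: eqP => e1; case: eqP => e2; try lia; rewrite ?(hQ _).2 ?subr0 //; lia.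
Qed.

Lemma iter_adx_polydiag d s Q :
  (forall t, (t < s)%N -> (t < d)%N ->
     (iter t (fdiff 1) Q).[(d - t.+1)%:R] = 0 /\
     (iter t (fdiff 1) Q).[n.+1%:R] = 0) ->
  iter s (@adx k n) (polydiag_mx d 0 Q) = polydiag_mx d s (iter s (fdiff 1) Q).
Proof.
elim: s => [|s IH] hQ //.
by rewrite iterS IH => [|t ht]; rewrite ?adx_polydiag //; apply: hQ; lia.
Qed.

Lemma polydiag_Xmxn c : polydiag_mx c (2 * c) 1 = Xmx k n ^+ c.
Proof.
apply: eq_mx_ent => i j hi hj; rewrite ent_polydiag // ent_Xmxn hi hj hornerC.
by case: eqP => e1; case: eqP => e2; try lia.
Qed.

(* [X^c] is hit by [ad_x^(2c)] from a diagonal matrix whose entries are the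
   values of the degree-[2c] polynomial with roots [0..c-1] and
   [n+1..n+c], normalised so that its [2c]-th difference is [1]. *)
Lemma Xmxn_in_iter_adx_image c : [pchar k] =i pred0 -> (c <= n)%N ->
  exists A : 'M[k]_n.+1, iter (2 * c) (@adx k n) A = Xmx k n ^+ c.
Proof.
move=> chark0 le_cn.
pose P : {poly k} := ((2 * c)`!%:R)^-1 *:
  (progression_poly 0 1 c * progression_poly n.+1%:R 1 c).
have fact_neq0 : (2 * c)`!%:R != 0 :> k.
  by move/pcharf0P: chark0 => ->; rewrite -lt0n fact_gt0.
have diffP : iter (2 * c) (fdiff 1) P = 1.
  rewrite iter_fdiffZ iter_fdiff1_monic ?rpredM ?monic_progression_poly
    ?size_progression_polyM //.
  by rewrite exprM sqrrN !expr1n mul1r -mul_polyC -polyCM mulVf.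
have iterP_root x i t : x = 0 \/ x = n.+1%:R -> (i + t < c)%N ->
    (iter t (fdiff 1) P).[x + i%:R * 1] = 0.
  move=> hx; apply: iter_fdiff_root => j lt_jc.
  by rewrite hornerZ hornerM; case: hx => ->;
    rewrite progression_poly_root ?mul0r ?mulr0.
exists (polydiag_mx c 0 P).
rewrite iter_adx_polydiag ?diffP ?polydiag_Xmxn // => t _ lt_tc; split.
  have := iterP_root 0 (c - t.+1)%N t (or_introl erefl).
  by rewrite add0r mulr1; apply; lia.
have := iterP_root _ 0%N t (or_intror erefl).
by rewrite mul0r addr0; apply; lia.
Qed.

End PolyDiagonal.

Section DiagonalPairing.
Variables (k : fieldType) (n : nat).
Implicit Types (W : {poly k}) (M : 'M[k]_n.+1) (e : nat).

(* [adx] is adjoint to the backward difference [fdiff (-1)] for these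
   pairings, up to boundary terms. *)
Definition subdiag_pairing e W M : k :=
  \sum_(j < n.+1) W.[(j : nat)%:R] * ent M (j + e) j.

Definition superdiag_pairing e W M : k :=
  \sum_(j < n.+1) W.[(j + e)%:R] * ent M j (j + e).

Lemma subdiag_pairing0 W M : subdiag_pairing 0 W M = superdiag_pairing 0 W M.
Proof. by apply: eq_bigr => j _; rewrite !addn0. Qed.

Lemma subdiag_pairing_adx e W M : W.[-1] = 0 -> W.[(n - e)%:R] = 0 ->
  subdiag_pairing e.+1 W (adx M) = subdiag_pairing e (fdiff (-1) W) M.
Proof.
move=> W_m1 W_ne.
have step (j : 'I_n.+1) : W.[(j : nat)%:R] * ent (adx M) (j + e.+1) j =
    W.[(j : nat)%:R] * ent M (j + e) j -
    W.[(j : nat)%:R] * ent M (j + e).+1 j.+1.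
  rewrite addnS ent_adx ltn_ord andbT -mulrBr; case: ifP => // hje.
  rewrite (ent_out M (i := (j + e).+1)) ?hje // subr0.
  have [hje2|hje2] := leqP (j + e) n.
    have -> : (j : nat) = (n - e)%N by move: hje; rewrite ltnS => /negbT; lia.
    by rewrite W_ne !mul0r.
  by rewrite ent_out ?mulr0 // negb_and -leqNgt hje2.
pose F j := W.[j%:R - 1] * ent M (j + e) j.
have shiftF (j : 'I_n.+1) :
    W.[(j : nat)%:R] * ent M (j + e).+1 j.+1 = F (j : nat).+1.
  by rewrite /F -natr1 addrK.
rewrite /subdiag_pairing (eq_bigr _ (fun j _ => step j)) sumrB.
rewrite (eq_bigr _ (fun j _ => shiftF j)).
have -> : \sum_(j < n.+1) F j.+1 = \sum_(j < n.+1) F j.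
  have F0 : F 0%N = 0 by rewrite /F sub0r W_m1 mul0r.
  have Fn : F n.+1 = 0.
    by rewrite /F (ent_out M (i := (n.+1 + e)%N)) ?mulr0 // negb_and ltnn orbT.
  have recl : \sum_(i < n.+2) F i = F 0%N + \sum_(i < n.+1) F i.+1.
    by rewrite big_ord_recl.
  have recr : \sum_(i < n.+2) F i = \sum_(i < n.+1) F i + F n.+1.
    by rewrite big_ord_recr.
  by move: recl; rewrite recr F0 Fn add0r addr0.
by rewrite -sumrB; apply: eq_bigr => j _; rewrite /F horner_fdiff mulrBl.
Qed.

Lemma superdiag_pairing_adx e W M :
  superdiag_pairing e W (adx M) = superdiag_pairing e.+1 (fdiff (-1) W) M.
Proof.
pose G i :=
  if i is i'.+1 then W.[(i' + e.+1)%:R] * ent M i' (i' + e.+1) else 0.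
have step (i : 'I_n.+1) : W.[((i : nat) + e)%:R] * ent (adx M) i (i + e) =
    G i - W.[((i : nat) + e)%:R] * ent M i (i + e.+1).
  rewrite ent_adx ltn_ord /= addnS; case: ifP => hie.
    rewrite mulrBr; congr (_ - _); rewrite /G.
    by case: (nat_of_ord i) => [|i']; rewrite ?mulr0 // addSnnS.
  rewrite mulr0 (ent_out M (i := i)) ?mulr0; last first.
    rewrite negb_and; apply/orP; right.
    by move/negbT: hie; rewrite -!leqNgt; lia.
  rewrite subr0 /G; case: (nat_of_ord i) hie => [|i'] hie //.
  by rewrite ent_out ?mulr0 // negb_and -addSnnS hie orbT.
rewrite /superdiag_pairing (eq_bigr _ (fun i _ => step i)) sumrB.
have -> : \sum_(i < n.+1) G i = \sum_(i < n.+1) G i.+1.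
  have Gn : G n.+1 = 0.
    rewrite /G ent_out ?mulr0 // negb_and.
    by apply/orP; right; rewrite -leqNgt; lia.
  have recl : \sum_(i < n.+2) G i = G 0%N + \sum_(i < n.+1) G i.+1.
    by rewrite big_ord_recl.
  have recr : \sum_(i < n.+2) G i = \sum_(i < n.+1) G i + G n.+1.
    by rewrite big_ord_recr.
  by move: recl; rewrite recr Gn add0r addr0.
rewrite -sumrB; apply: eq_bigr => i _.
by rewrite /G horner_fdiff addnS -natr1 addrK mulrBl.
Qed.

Lemma subdiag_pairing_iter_adx e s W M : (s <= e)%N ->
  (forall t, (t < s)%N -> (iter t (fdiff (-1)) W).[-1] = 0 /\
     (iter t (fdiff (-1)) W).[(n - (e - t.+1))%:R] = 0) ->
  subdiag_pairing e W (iter s (@adx k n) M) =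
  subdiag_pairing (e - s) (iter s (fdiff (-1)) W) M.
Proof.
elim: s M => [|s IH] M le_se hW; first by rewrite subn0.
rewrite iterSr IH; [|exact: ltnW | by move=> t lt_ts; apply: hW; lia].
have [W_m1 W_n] := hW s (ltnSn s).
have -> : (e - s = (e - s.+1).+1)%N by lia.
by rewrite subdiag_pairing_adx.
Qed.

Lemma superdiag_pairing_iter_adx s W M :
  superdiag_pairing 0 W (iter s (@adx k n) M) =
  superdiag_pairing s (iter s (fdiff (-1)) W) M.
Proof. by elim: s M => // s IH M; rewrite iterSr IH superdiag_pairing_adx. Qed.

(* If [ad_x^p A = X^v] with [p > 2v], pair both sides with the degree-[2v]
   polynomial [W] vanishing at [-1..-v] and [n-v+1..n]: on the left all
   boundary terms vanish and [W] is differenced [p] times, giving [0]; on the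
   right the pairing is [sum_(j <= n-v) W(j)], a sum of nonzero integers of the
   same sign. *)
Lemma iter_adx_eq_Xmxn_leq p v (A : 'M[k]_n.+1) : [pchar k] =i pred0 ->
  (v <= n)%N -> iter p (@adx k n) A = Xmx k n ^+ v -> (p <= 2 * v)%N.
Proof.
move=> chark0 le_vn hA; rewrite leqNgt; apply/negP => lt_2vp.
pose W : {poly k} :=
  progression_poly (-1) (-1) v * progression_poly n%:R (-1) v.
have iterW_root x i t : x = -1 \/ x = n%:R -> (i + t < v)%N ->
    (iter t (fdiff (-1)) W).[x + i%:R * -1] = 0.
  move=> hx; apply: iter_fdiff_root => j lt_jv.
  by rewrite hornerM; case: hx => ->;
    rewrite progression_poly_root ?mul0r ?mulr0.
have sizeW : size W = (2 * v).+1 by apply: size_progression_polyM.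
have pairing_eq0 : subdiag_pairing v W (iter p (@adx k n) A) = 0.
  have -> : p = (v + (p - v))%N by lia.
  rewrite iterD subdiag_pairing_iter_adx // => [|t lt_tv].
    rewrite subnn subdiag_pairing0 superdiag_pairing_iter_adx -iterD.
    rewrite iter_fdiff_eq0 ?sizeW; last lia.
    by rewrite /superdiag_pairing big1 // => j _; rewrite horner0 mul0r.
  split.
    by have := iterW_root _ 0%N t (or_introl erefl); rewrite mul0r addr0; apply.
  have := iterW_root _ (v - t.+1)%N t (or_intror erefl).
  by rewrite mulrN1 -natrB; [apply; lia | lia].
pose N j := (\prod_(i < v) (j + i.+1) * \prod_(i < v) (n - i - j))%N.
have W_nat j : (j + v <= n)%N -> W.[j%:R] = (-1) ^+ v * (N j)%:R.
  move=> le_jvn; rewrite hornerM !horner_progression_poly natrM !natr_prod.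
  have -> : \prod_(i < v) (j%:R - (n%:R + i%:R * -1)) =
             \prod_(i < v) - ((n - i - j)%N%:R : k).
    apply: eq_bigr => i _; have lt_iv := ltn_ord i.
    by rewrite !natrB; [ring | lia | lia].
  rewrite prodrN card_ord mulrCA; congr (_ * (_ * _)); apply: eq_bigr => i _.
  by rewrite natrD; ring.
have N_gt0 j : (j + v <= n)%N -> (0 < N j)%N.
  move=> le_jvn; rewrite muln_gt0.
  by apply/andP; split; apply: prodn_gt0 => i; have := ltn_ord i; lia.
have pairing_Xmxn : subdiag_pairing v W (Xmx k n ^+ v) =
    (-1) ^+ v * (\sum_(j < n.+1) if (j + v <= n)%N then N j else 0)%:R.
  rewrite /subdiag_pairing natr_sum mulr_sumr; apply: eq_bigr => j _.
  rewrite ent_Xmxn ltn_ord andbT eqxx ltnS.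
  case: (boolP (j + v <= n)%N) => le_jvn; last by rewrite !mulr0.
  by rewrite W_nat // mulr1.
have : subdiag_pairing v W (Xmx k n ^+ v) != 0.
  rewrite pairing_Xmxn mulf_eq0 signr_eq0 /=; move/pcharf0P: chark0 => ->.
  by rewrite -lt0n big_ord_recl /= add0n le_vn ltn_addr ?N_gt0.
by rewrite -hA pairing_eq0 eqxx.
Qed.

End DiagonalPairing.

Section OrderFiltration.
Variables (k : fieldType) (n : nat).
Implicit Types (d E : 'M[k]_n.+1) (f : {poly k}).

Local Notation X := (Xmx k n).
Local Notation adx := (@adx k n).

Lemma commxC (a b d : 'M[k]_n.+1) : a *m b = b *m a ->
  commx a (commx b d) = commx b (commx a d).
Proof.
move=> hab; rewrite /commx !mulmxBr !mulmxBl !mulmxA hab -!mulmxA hab.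
rewrite !opprB !addrA [_ - a *m _ + _]addrAC [_ - b *m _ + _]addrAC.
by rewrite [LHS]addrAC.
Qed.

Lemma mulopX : mulop n ('X : {poly k}) = X.
Proof. exact: horner_mx_X. Qed.

Lemma mulopXnM v f : mulop n ('X^v * f) = X ^+ v *m mulop n f.
Proof. by rewrite /mulop rmorphM rmorphXn /= horner_mx_X mulmxE. Qed.

Lemma adx_Xmxn v : adx (X ^+ v) = 0.
Proof. by rewrite /adx /commx !mulmxE -exprS -exprSr subrr. Qed.

Lemma adx_commx_mulop f d :
  adx (commx (mulop n f) d) = commx (mulop n f) (adx d).
Proof. exact/commxC/comm_mx_horner. Qed.

Lemma iter_adx_commx_mulop m f d :
  iter m adx (commx (mulop n f) d) = commx (mulop n f) (iter m adx d).
Proof. by elim: m => //= m ->; rewrite adx_commx_mulop. Qed.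

Lemma commx_mulop_eq0 f E : adx E = 0 -> commx (mulop n f) E = 0.
Proof.
move=> /eqP; rewrite /adx /commx subr_eq0 => /eqP XE.
by rewrite (comm_horner_mx f XE) subrr.
Qed.

Lemma inDpP p d : inDp p d <-> iter p.+1 adx d = 0.
Proof.
split=> [Dd | ].
  rewrite -(Dd (nseq p.+1 'X)) ?size_nseq //.
  by elim: p.+1 => //= m ->; rewrite mulopX.
elim: p d => [|p IH] d hd fs.
  by case: fs => [|f [|]] //= _; apply: commx_mulop_eq0.
case/lastP: fs => [|fs f] //; rewrite size_rcons => -[hs].
rewrite foldr_rcons; apply: IH hs.
by rewrite iter_adx_commx_mulop commx_mulop_eq0 // -iterS.
Qed.

Lemma Xmxn_eq_mulmx_leq c v (G : 'M[k]_n.+1) :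
  (c <= n)%N -> X ^+ c = X ^+ v *m G -> (v <= c)%N.
Proof.
move=> le_cn /(congr1 (fun M => ent M c 0)).
rewrite ent_Xmxn ent_Xmxn_mull ltnS le_cn /= add0n eqxx.
by case: leqP => // _ /eqP; rewrite oner_eq0.
Qed.

Lemma vp_spec_uphalf p v : [pchar k] =i pred0 -> (p <= 2 * n)%N ->
  vp_spec k n p v -> v = (p.+1 %/ 2)%N.
Proof.
move=> chark0 le_p2n [le_vn image_eq].
set c := (p.+1 %/ 2)%N.
have le_cn : (c <= n)%N by rewrite /c; lia.
apply/eqP; rewrite eqn_leq; apply/andP; split.
  have [A hA] := Xmxn_in_iter_adx_image chark0 le_cn.
  pose d := iter (2 * c - p) adx A.
  have ad_d : iter p adx d = X ^+ c by rewrite /d -iterD subnKC //; lia.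
  have Dd : inDp p d by apply/inDpP; rewrite iterS ad_d adx_Xmxn.
  have [g hg] := (image_eq (X ^+ c)).1 (ex_intro _ d (conj Dd ad_d)).
  by apply: (Xmxn_eq_mulmx_leq le_cn); rewrite hg mulopXnM.
have [|d [_ ad_d]] := (image_eq (X ^+ v)).2.
  by exists 1; rewrite mulopXnM /mulop horner_mx_C mulmx1.
by have := iter_adx_eq_Xmxn_leq chark0 le_vn ad_d; rewrite /c; lia.
Qed.

End OrderFiltration.

Lemma sum_uphalf n : (\sum_(1 <= p < (2 * n).+1) p.+1 %/ 2 = n * (n + 1))%N.
Proof.
elim: n => [|n IH]; first by rewrite big_geq.
rewrite (_ : (2 * n.+1).+1 = (2 * n).+3)%N; last lia.
by rewrite big_nat_recr // big_nat_recr //= IH; lia.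
Qed.

Theorem corollary4 (k : fieldType) (chark0 : [pchar k]%R =i pred0)
  (n : nat) (hn : (1 <= n)%N) (v : nat -> nat)
  (hv : forall p : nat, (1 <= p <= 2 * n)%N -> vp_spec k n p (v p)) :
  (\sum_(1 <= p < (2 * n).+1) v p)%N = (n * (n + 1))%N.
Proof.
rewrite -sum_uphalf; apply: eq_big_nat => p; rewrite ltnS => hp.
by apply: vp_spec_uphalf (hv p hp) => //; case/andP: hp.
Qed.
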